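(* Let $R$ be a uniform $L$-layered $1$-semifield$^\dagger$ with $L=\mathbb{Q}_{>0}$. The layered derivative of a separable polynomial in $R[\lambda]$ is separable.
   Context: Concretely, $R=R(\mathbb{Q}_{>0},\mathcal{G})$ with $\mathcal{G}$ a totally ordered abelian group; elements $x^{[\ell]}$ ($x\in\mathcal{G}$, layer $\ell\in\mathbb{Q}_{>0}$), $x^{[k]}y^{[\ell]}=(xy)^{[k\ell]}$, $x^{[k]}+y^{[\ell]}$ equal to $x^{[k]}$ if $x>y$, $y^{[\ell]}$ if $x<y$, $x^{[k+\ell]}$ if $x=y$; a zero element $\mathbb{0}_R$ is formally adjoined. Two elements are $\nu$-equivalent if they have the same $\mathcal{G}$-value. An element $b$ is a corner root of $f=\sum h_i$ (sum of monomials) if $f(b)\neq h_i(b)$ for each monomial $h_i$. A polynomial is separable if it is a constant times a product of linear factors having pairwise $\nu$-inequivalent corner roots. The layered derivative of $\sum_{j=0}^n\alpha_j^{[\ell_j]}\lambda^j$ is $\sum_{j=1}^n\alpha_j^{[j\ell_j]}\lambda^{j-1}$. *)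

From HB Require Import structures.
From mathcomp Require Import all_boot all_order all_algebra.
Set Implicit Arguments. Unset Strict Implicit. Unset Printing Implicit Defensive.
Import Order.TTheory GRing.Theory Num.Theory.
Local Open Scope ring_scope.

(* The group operation of the paper (written multiplicatively) is [+] here. *)
Definition is_total_order_group (G : zmodType) (le : rel G) : Prop :=
  [/\ (forall x y, le x y -> le y x -> x = y),
      (forall x y z, le x y -> le y z -> le x z),
      (forall x y, le x y || le y x) &
      (forall x y z, le x y -> le (x + z) (y + z))].

Definition posq := {q : rat | 0 < q}.

Lemma posq_add_proof (k l : posq) : 0 < val k + val l.
Proof. by apply: addr_gt0; [exact: valP k | exact: valP l]. Qed.
Lemma posq_mul_proof (k l : posq) : 0 < val k * val l.
Proof. by apply: mulr_gt0; [exact: valP k | exact: valP l]. Qed.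
Lemma posq_scale_proof (n : nat) (k : posq) : 0 < (n.+1)%:R * val k.
Proof. by apply: mulr_gt0; [exact: ltr0Sn | exact: valP k]. Qed.
Lemma posq_one_proof : 0 < (1 : rat). Proof. exact: ltr01. Qed.

Definition posq_add (k l : posq) : posq := exist (fun q : rat => 0 < q) _ (posq_add_proof k l).
Definition posq_mul (k l : posq) : posq := exist (fun q : rat => 0 < q) _ (posq_mul_proof k l).
Definition posq_scale (n : nat) (k : posq) : posq :=
  exist (fun q : rat => 0 < q) _ (posq_scale_proof n k).
Definition posq1 : posq := exist (fun q : rat => 0 < q) _ posq_one_proof.

Section Layered.
Variables (G : zmodType) (le : rel G).

(* The uniform layered 1-semifield R(Q_{>0}, G) with a formally adjoined zero:
   [None] is 0_R, [Some (x, l)] is x^[l]. *)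
Definition LR := option (G * posq).

Definition lzero : LR := None.
Definition lone : LR := Some (0, posq1).

Definition ladd (a b : LR) : LR :=
  match a, b with
  | None, _ => b
  | _, None => a
  | Some (x, k), Some (y, l) =>
      if x == y then Some (x, posq_add k l)
      else if le x y then b else a
  end.

Definition lmul (a b : LR) : LR :=
  match a, b with
  | Some (x, k), Some (y, l) => Some (x + y, posq_mul k l)
  | _, _ => None
  end.

Fixpoint lpow (a : LR) (n : nat) : LR :=
  match n with 0 => lone | n.+1 => lmul a (lpow a n) end.

Definition nu_equiv (a b : LR) : bool :=
  match a, b with
  | Some (x, _), Some (y, _) => x == y
  | None, None => true
  | _, _ => false
  end.

Definition lsum (s : seq LR) : LR := foldr ladd lzero s.

(* Polynomials in R[lambda]: coefficient lists, coefficient of lambda^i at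
   position i; equality of polynomials ignores trailing zeros. *)
Definition lpoly := seq LR.
Definition coef (p : lpoly) (i : nat) : LR := nth lzero p i.
Definition poly_eq (p q : lpoly) : Prop := forall i, coef p i = coef q i.

Definition peval (p : lpoly) (b : LR) : LR :=
  lsum [seq lmul (coef p i) (lpow b i) | i <- iota 0 (size p)].

Definition corner_root (p : lpoly) (b : LR) : Prop :=
  forall i, (i < size p)%N -> coef p i != lzero ->
    peval p b != lmul (coef p i) (lpow b i).

Definition pmul (p q : lpoly) : lpoly :=
  mkseq (fun k => lsum [seq lmul (coef p i) (coef q (k - i)) | i <- iota 0 k.+1])
        (size p + size q).-1.

(* the linear polynomial alpha*lambda + beta, given as (alpha, beta) *)
Definition linpoly (ab : LR * LR) : lpoly := [:: ab.2; ab.1].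

Definition prod_lin (ls : seq (LR * LR)) : lpoly :=
  foldr (fun ab acc => pmul (linpoly ab) acc) [:: lone] ls.

Definition separable (f : lpoly) : Prop :=
  exists (c : LR) (ls : seq (LR * LR)),
    [/\ (forall ab, ab \in ls -> ab.1 != lzero /\ ab.2 != lzero),
        (forall i j, (i < j)%N -> (j < size ls)%N ->
           forall b b', corner_root (linpoly (nth (lone, lone) ls i)) b ->
                        corner_root (linpoly (nth (lone, lone) ls j)) b' ->
                        ~~ nu_equiv b b') &
        poly_eq f (pmul [:: c] (prod_lin ls))].

Definition lscale (n : nat) (a : LR) : LR :=
  match a with
  | Some (x, l) => Some (x, posq_scale n l)
  | None => None
  end.

Definition lderiv (f : lpoly) : lpoly :=
  [seq lscale i (coef f i.+1) | i <- iota 0 (size f).-1].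

End Layered.

From HB Require Import structures.
From mathcomp Require Import all_boot all_order all_algebra.
From mathcomp Require Import lra.
Set Implicit Arguments. Unset Strict Implicit. Unset Printing Implicit Defensive.
Import Order.TTheory GRing.Theory Num.Theory.
Local Open Scope ring_scope.
Local Open Scope order_scope.

(* Write [v_k] for the G-value of the coefficient of [lambda^k].  A product of
   linear factors with pairwise distinct roots has all coefficients up to its
   degree nonzero and strictly increasing slopes [v_(k-1) - v_k]: multiplying
   by one more factor inserts its root among the slopes.  Conversely, such a
   strictly concave coefficient sequence factors completely, by splitting off
   the linear factor whose root is the least slope; the roots obtained are the
   slopes, hence distinct.  The layered derivative drops the constant term and
   only changes layers, so it preserves strict concavity (with degree one
   less), and separability follows. *)

Section LayeredPolynomials.
Variables (G : zmodType) (le : rel G).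
Hypothesis HG : is_total_order_group le.

(* An alias of [G] on which [le] is the canonical total order. *)
Definition ogroup : Type := G.
HB.instance Definition _ := GRing.Zmodule.on ogroup.

Fact ogroup_le_refl : reflexive (le : rel ogroup).
Proof. by case: HG => _ _ le_total _ x; have := le_total x x; rewrite orbb. Qed.
Fact ogroup_le_anti : antisymmetric (le : rel ogroup).
Proof. by case: HG => le_anti _ _ _ x y /andP[]; apply: le_anti. Qed.
Fact ogroup_le_trans : transitive (le : rel ogroup).
Proof. by case: HG => _ le_trans _ _ y x z; apply: le_trans. Qed.
HB.instance Definition _ := Order.Le_isPOrder.Build (Order.Disp tt tt) ogroup
  ogroup_le_refl ogroup_le_anti ogroup_le_trans.
Fact ogroup_le_total : total (le : rel ogroup). Proof. by case: HG. Qed.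
HB.instance Definition _ := Order.POrder_isTotal.Build (Order.Disp tt tt) ogroup
  ogroup_le_total.

Lemma lerD2r (z x y : ogroup) : (x + z <= y + z) = (x <= y).
Proof.
case: HG => _ _ _ compat; apply/idP/idP; last exact: compat.
by move=> /(compat _ _ (- z)); rewrite !addrK.
Qed.

Lemma lerD2l (z x y : ogroup) : (z + x <= z + y) = (x <= y).
Proof. by rewrite ![z + _]addrC lerD2r. Qed.

Lemma ltrD2r (z x y : ogroup) : (x + z < y + z) = (x < y).
Proof. by rewrite !ltNge lerD2r. Qed.

Lemma ltrBrD (x y z : ogroup) : (x < y - z) = (x + z < y).
Proof. by rewrite -(ltrD2r z) subrK. Qed.

Lemma ltr_subsub (a b y z : ogroup) : (y - z < b - a) = (a + y < b + z).
Proof. by rewrite -(ltrD2r (a + z)) addrCA subrK addrA subrK. Qed.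

Lemma subrDl (c y z : ogroup) : (c + y) - (c + z) = y - z.
Proof. by rewrite opprD addrACA subrr add0r. Qed.

Lemma subrDr (a b y : ogroup) : (a + y) - (b + y) = a - b.
Proof. by rewrite opprD addrACA subrr addr0. Qed.

Notation LRG := (LR G).

Definition gval (a : LRG) : ogroup := if a is Some (x, _) then x else 0.

Lemma lmulr0 (a : LRG) : lmul a None = None. Proof. by case: a => [[]|]. Qed.
Lemma laddr0 (a : LRG) : ladd le a None = a. Proof. by case: a => [[]|]. Qed.

Lemma lmul1r (a : LRG) : lmul (lone G) a = a.
Proof.
case: a => [[x l]|] //=; rewrite add0r; congr (Some (_, _)).
by apply: val_inj; rewrite /= mul1r.
Qed.

Lemma lmulr1 (a : LRG) : lmul a (lone G) = a.
Proof.
case: a => [[x l]|] //=; rewrite addr0; congr (Some (_, _)).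
by apply: val_inj; rewrite /= mulr1.
Qed.

Lemma lmulC (a b : LRG) : lmul a b = lmul b a.
Proof.
case: a => [[x k]|]; case: b => [[y l]|] //=; rewrite addrC; congr (Some (_, _)).
by apply: val_inj; rewrite /= mulrC.
Qed.

Lemma lmulA (a b c : LRG) : lmul a (lmul b c) = lmul (lmul a b) c.
Proof.
case: a => [[x k]|]; case: b => [[y l]|]; case: c => [[z m]|] //=.
rewrite addrA; congr (Some (_, _)).
by apply: val_inj; rewrite /= mulrA.
Qed.

Lemma lmulCA (a b c : LRG) : lmul a (lmul b c) = lmul b (lmul a c).
Proof. by rewrite lmulA (lmulC a) -lmulA. Qed.

Lemma lmul_laddr (c a b : LRG) :
  lmul c (ladd le a b) = ladd le (lmul c a) (lmul c b).
Proof.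
case: c => [[z m]|] //; case: a => [[x k]|]; case: b => [[y l]|] //=.
rewrite (inj_eq (addrI z)) (lerD2l z x y : le (z + x) (z + y) = le x y).
case: eqP => [e|_]; last by case: (le x y).
by subst y; congr (Some (_, _)); apply: val_inj; rewrite /= mulrDr.
Qed.

Lemma gval_lmul (a b : LRG) : a != None -> b != None ->
  gval (lmul a b) = gval a + gval b.
Proof. by case: a => [[]|]; case: b => [[]|]. Qed.

Lemma lmul_eq0 (a b : LRG) : (lmul a b == None) = (a == None) || (b == None).
Proof. by case: a => [[]|]; case: b => [[]|]. Qed.

Lemma ladd_idPr (a b : LRG) : b != None -> gval a < gval b -> ladd le a b = b.
Proof.
case: a => [[x k]|] //; case: b => [[y l]|] //= _ xy.
have -> : le x y := ltW xy.
by rewrite ifF //; apply/eqP => exy; rewrite exy ltxx in xy.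
Qed.

Lemma ladd_idPl (a b : LRG) : a != None -> gval b < gval a -> ladd le a b = a.
Proof.
case: a => [[x k]|] //; case: b => [[y l]|] //= _ yx.
have -> : le x y = false := lt_geF yx.
by rewrite ifF //; apply/eqP => exy; rewrite exy ltxx in yx.
Qed.

Lemma lsum_none (F : nat -> LRG) a n :
  (forall i, (a <= i)%N -> F i = None) -> lsum le [seq F i | i <- iota a n] = None.
Proof.
elim: n a => [|n IHn] a F0 //=.
by rewrite IHn ?F0 // => i /ltnW; apply: F0.
Qed.

Lemma coef_default (p : lpoly G) k : (size p <= k)%N -> coef p k = None.
Proof. exact: nth_default. Qed.

Lemma coef_pmulC (c : LRG) q k : coef (pmul le [:: c] q) k = lmul c (coef q k).
Proof.
rewrite {1}/coef /pmul /=; case: (ltnP k (size q)) => hk; last first.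
  by rewrite nth_default ?size_mkseq // coef_default // lmulr0.
rewrite nth_mkseq //= lsum_none ?laddr0 ?subn0 // => -[|i] _ //.
by rewrite /coef /= nth_nil.
Qed.

Definition lin_mul (a b : LRG) (p : nat -> LRG) (k : nat) : LRG :=
  ladd le (lmul b (p k)) (if k is k'.+1 then lmul a (p k') else None).

Lemma lin_mul0 a b p : lin_mul a b p 0 = lmul b (p 0%N).
Proof. exact: laddr0. Qed.

Lemma lin_mulS a b p k :
  lin_mul a b p k.+1 = ladd le (lmul b (p k.+1)) (lmul a (p k)).
Proof. by []. Qed.

Lemma coef_pmul_lin (a b : LRG) q k :
  coef (pmul le (linpoly (a, b)) q) k = lin_mul a b (coef q) k.
Proof.
rewrite {1}/coef /pmul /lin_mul /=; case: (ltnP k (size q).+1) => hk; last first.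
  rewrite nth_default ?size_mkseq ?add1n // coef_default; last exact: ltnW.
  by case: k hk => [|k] // hk; rewrite (@coef_default q k) ?lmulr0.
rewrite nth_mkseq //; case: k hk => [|k] hk /=; first by rewrite laddr0.
rewrite lsum_none ?laddr0 ?subn0 ?subSS ?subn0 // => -[|[|i]] _ //.
by rewrite /coef /= nth_nil.
Qed.

(** * Strictly concave coefficient sequences *)

(* [slope w k] is the corner root between the monomials of degrees [k.-1] and
   [k]; strict concavity of [k |-> gval (w k)] makes every monomial essential. *)
Definition slope (w : nat -> LRG) (k : nat) : ogroup := gval (w k.-1) - gval (w k).

Definition strictly_concave (w : nat -> LRG) (n : nat) : Prop :=
  [/\ forall k, (k <= n)%N -> w k != None,
      forall k, (n < k)%N -> w k = None &
      forall k, (0 < k < n)%N -> slope w k < slope w k.+1].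

Lemma slope_lt w n : strictly_concave w n ->
  {in [pred k | 0 < k <= n]%N &, {homo slope w : i j / (i < j)%N >-> i < j}}.
Proof.
case=> _ _ slopeS; apply: Order.NatMonotonyTheory.homo_ltn_lt_in.
  move=> i j /andP[i0 _] /andP[_ jn] k /andP[ik kj].
  by rewrite inE (ltn_trans i0 ik) (ltnW (leq_trans kj jn)).
by move=> i /andP[i0 _] /andP[_ i_lt_n]; apply: slopeS; rewrite i0.
Qed.

Lemma sorted_slopes w n : strictly_concave w n ->
  sorted <%O [seq slope w k | k <- iota 1 n].
Proof.
move=> /slope_lt homo; apply: (homo_sorted_in homo _ (iota_ltn_sorted 1 n)).
by apply/allP => k; rewrite mem_iota add1n ltnS.
Qed.

Lemma strictly_concave_behead w n :
  strictly_concave w n.+1 -> strictly_concave (fun k => w k.+1) n.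
Proof.
case=> nz z slopeS; split=> [k|k|[|k] //] k_range;
  [exact: nz | exact: z | exact: (slopeS k.+2)].
Qed.

Lemma strictly_concave_translate w v (x : ogroup) n :
  (forall k, (v k == None) = (w k == None)) ->
  (forall k, w k != None -> gval (v k) = x + gval (w k)) ->
  strictly_concave w n -> strictly_concave v n.
Proof.
move=> vw gv [nz z slopeS]; split=> [k kn|k nk|k /andP[k0 kn]].
- by rewrite vw nz.
- by apply/eqP; rewrite vw z.
have slopeE j : (j <= n)%N -> slope v j = slope w j.
  by move=> jn; rewrite /slope !gv ?subrDl ?nz // (leq_trans (leq_pred j)).
by rewrite !slopeE ?(ltnW kn) //; apply: slopeS; rewrite k0.
Qed.

(** * Products of linear factors *)

Lemma nat_threshold (P : pred nat) n :
  (forall k, (0 < k < n)%N -> P k.+1 -> P k) ->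
  exists2 t, (t <= n)%N & forall k, (0 < k <= n)%N -> P k = (k <= t)%N.
Proof.
elim: n => [|n IHn] Pdown; first by exists 0%N => // -[].
have [|t tn Pt] := IHn; first by move=> k /andP[k0 kn]; apply: Pdown; rewrite k0 ltnW.
case Pn1: (P n.+1); last first.
  exists t => [|k /andP[k0]]; first exact: leqW.
  rewrite leq_eqVlt ltnS => /orP[/eqP->|kn]; first by rewrite Pn1 ltnNge tn.
  by rewrite Pt ?k0.
exists n.+1 => // k /andP[k0 kn1]; rewrite kn1.
move: kn1; rewrite leq_eqVlt ltnS => /orP[/eqP->//|kn].
have n0 := leq_trans k0 kn.
have Pn : P n by apply: (Pdown n) Pn1; rewrite n0 ltnSn.
have nt : (n <= t)%N by rewrite -(Pt n) ?n0 ?leqnn.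
by rewrite Pt ?k0 ?(leq_trans kn nt).
Qed.

Section LinearFactor.
Variables (p : nat -> LRG) (n : nat) (xa xb : ogroup) (la lb : posq) (t : nat).
Hypothesis concave_p : strictly_concave p n.
Let a : LRG := Some (xa, la).
Let b : LRG := Some (xb, lb).
Let r : ogroup := xb - xa.
Hypothesis slope_neq_r : forall k, (0 < k <= n)%N -> slope p k != r.
Hypotheses (tn : (t <= n)%N)
           (slope_lt_r : forall k, (0 < k <= n)%N -> (slope p k < r) = (k <= t)%N).

Let p_neq0 k : (k <= n)%N -> p k != None.
Proof. by case: concave_p => nz _ _; apply: nz. Qed.

Let slope_lt_root k : (0 < k <= t)%N -> slope p k < r.
Proof. by case/andP=> k0 kt; rewrite slope_lt_r ?k0 ?(leq_trans kt tn). Qed.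

Let root_lt_slope k : (t < k <= n)%N -> r < slope p k.
Proof.
case/andP=> tk kn; have k0 : (0 < k)%N := leq_ltn_trans (leq0n t) tk.
rewrite lt_neqAle eq_sym slope_neq_r ?k0 //= leNgt slope_lt_r ?k0 //.
by rewrite -ltnNge.
Qed.

Lemma lin_mul_low k : (k <= t)%N -> lin_mul a b p k = lmul b (p k).
Proof.
case: k => [|k] kt; first exact: lin_mul0.
have kn : (k.+1 <= n)%N := leq_trans kt tn.
rewrite lin_mulS; apply: ladd_idPl; first by rewrite lmul_eq0 negb_or p_neq0.
rewrite !gval_lmul ?p_neq0 ?(ltnW kn) // -ltr_subsub.
exact: (slope_lt_root (k := k.+1)).
Qed.

Lemma lin_mul_high k : (t < k <= n.+1)%N -> lin_mul a b p k = lmul a (p k.-1).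
Proof.
case: k => [|k] // /andP[tk]; rewrite ltnS leq_eqVlt => /orP[/eqP->|kn].
  by case: concave_p => _ z _; rewrite lin_mulS z.
rewrite lin_mulS; apply: ladd_idPr; first by rewrite lmul_eq0 negb_or p_neq0 ?(ltnW kn).
rewrite !gval_lmul ?p_neq0 ?(ltnW kn) // addrC [xa + _]addrC -ltr_subsub.
by apply: (root_lt_slope (k := k.+1)); rewrite tk.
Qed.

Lemma lin_mul_neq0 k : (k <= n.+1)%N -> lin_mul a b p k != None.
Proof.
move=> kn; case: (leqP k t) => kt.
  by rewrite lin_mul_low // lmul_eq0 negb_or p_neq0 // (leq_trans kt tn).
by rewrite lin_mul_high ?kt // lmul_eq0 negb_or p_neq0 // -ltnS (ltn_predK kt).
Qed.

(* The corner roots of [(a lambda + b) p] are those of [p] with [r] inserted. *)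
Lemma slope_lin_mul k : (0 < k <= n.+1)%N -> slope (lin_mul a b p) k =
  if (k <= t)%N then slope p k else if k == t.+1 then r else slope p k.-1.
Proof.
case/andP=> k0 kn; rewrite /slope.
have k1n : (k.-1 <= n)%N by rewrite -ltnS (ltn_predK k0).
case: (leqP k t) => kt.
  have ktn : (k <= n)%N := leq_trans kt tn.
  by rewrite !lin_mul_low ?(leq_trans (leq_pred k) kt) // !gval_lmul ?p_neq0 ?subrDl.
rewrite [lin_mul _ _ _ k]lin_mul_high ?kt // gval_lmul ?p_neq0 //.
case: eqP => [-> | /eqP kt1]; first by rewrite lin_mul_low // gval_lmul ?p_neq0 ?subrDr.
have tk1 : (t < k.-1)%N by rewrite -ltnS (ltn_predK k0) ltn_neqAle eq_sym kt1.
have k2n : (k.-2 <= n)%N := leq_trans (leq_pred _) k1n.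
by rewrite lin_mul_high ?tk1 ?(leqW k1n) // gval_lmul ?p_neq0 ?subrDl.
Qed.

Lemma strictly_concave_lin_mul : strictly_concave (lin_mul a b p) n.+1.
Proof.
split=> [k|[|k] nk|k /andP[k0 kn]]; first exact: lin_mul_neq0; first by [].
  by case: concave_p => _ z _; rewrite lin_mulS !z ?(ltnW nk).
rewrite !slope_lin_mul ?k0 ?(ltnW kn) //.
have slopeS := let: And3 _ _ slopeS := concave_p in slopeS.
case: (leqP k.+1 t) => [k1t|]; first by rewrite (ltnW k1t) slopeS ?k0 ?(leq_trans k1t tn).
rewrite ltnS leq_eqVlt => /orP[/eqP tk|tk].
  by rewrite -tk leqnn eqxx slope_lt_root // tk k0 leqnn.
rewrite leqNgt tk eqSS (gtn_eqF tk) /=.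
case: eqP => [kt1 | /eqP kt1].
  by rewrite kt1 in kn *; apply: root_lt_slope; rewrite ltnSn -ltnS.
have tk1 : (t < k.-1)%N by rewrite -ltnS (ltn_predK k0) ltn_neqAle eq_sym kt1.
rewrite -[in X in _ < X](ltn_predK k0); apply: slopeS.
by rewrite (leq_ltn_trans (leq0n t) tk1) -ltnS (ltn_predK k0).
Qed.

Lemma slope_lin_mul_mem k : (0 < k <= n.+1)%N ->
  slope (lin_mul a b p) k \in r :: [seq slope p j | j <- iota 1 n].
Proof.
move=> /[dup] /andP[k0 kn] /slope_lin_mul ->; rewrite inE.
case: ifP => [kt|/negbT kt].
  by rewrite map_f ?orbT // mem_iota add1n k0 ltnS (leq_trans kt tn).
case: ifP => [_|/negbT kt1]; first by rewrite eqxx.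
have tk1 : (t < k.-1)%N by rewrite -ltnS (ltn_predK k0) ltn_neqAle eq_sym kt1 ltnNge.
by rewrite map_f ?orbT // mem_iota add1n (leq_ltn_trans (leq0n t) tk1) (ltn_predK k0).
Qed.

End LinearFactor.

Lemma eq_slope w v : w =1 v -> slope w =1 slope v.
Proof. by move=> wv k; rewrite /slope !wv. Qed.

Lemma eq_strictly_concave w v n :
  w =1 v -> strictly_concave w n -> strictly_concave v n.
Proof.
move=> wv; apply: (strictly_concave_translate (x := 0)) => k; first by rewrite wv.
by rewrite wv add0r.
Qed.

Definition nonzero_factors (ls : seq (LRG * LRG)) : Prop :=
  forall ab, ab \in ls -> ab.1 != None /\ ab.2 != None.

Definition root_of (ab : LRG * LRG) : ogroup := gval ab.2 - gval ab.1.

Lemma strictly_concave_prod_lin ls : nonzero_factors ls -> uniq (map root_of ls) ->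
  strictly_concave (coef (prod_lin le ls)) (size ls) /\
  {subset [seq slope (coef (prod_lin le ls)) k | k <- iota 1 (size ls)]
     <= map root_of ls}.
Proof.
elim: ls => [|[[[xa la]|] [[xb lb]|]] ls IHls] nz;
  do ?by have [] := nz _ (mem_head _ _).
  by split=> //; split=> [[|k]|[|k]|[|[|k]]] //; rewrite /coef /= ?nth_nil.
case/andP=> r_notin uniq_roots.
have [|//|concave_p slopes_p] := IHls.
  by move=> ab ab_ls; apply: nz; rewrite inE ab_ls orbT.
set p := coef (prod_lin le ls) in concave_p slopes_p *.
set r := xb - xa.
have {}r_notin : r \notin map root_of ls := r_notin.
have slope_neq_r k : (0 < k <= size ls)%N -> slope p k != r.
  move=> k_range; apply: contraNneq r_notin => <-.
  by apply: slopes_p; rewrite map_f // mem_iota add1n.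
have [t tn slope_lt_r] := nat_threshold (P := fun k => slope p k < r) (n := size ls)
  (fun k k_range => lt_trans (let: And3 _ _ slopeS := concave_p in slopeS k k_range)).
have qE := coef_pmul_lin (Some (xa, la)) (Some (xb, lb)) (prod_lin le ls).
split; first exact: eq_strictly_concave (fun k => esym (qE k))
  (strictly_concave_lin_mul la lb concave_p slope_neq_r tn slope_lt_r).
move=> x /mapP[k k_range ->]; rewrite (eq_slope qE).
have := slope_lin_mul_mem la lb concave_p slope_neq_r tn slope_lt_r.
rewrite mem_iota add1n ltnS in k_range => /(_ k k_range).
by rewrite !inE => /orP[-> // | /slopes_p ->]; rewrite orbT.
Qed.

Lemma lmul_lin_mul c a b p k :
  lmul c (lin_mul a b p k) = lin_mul a b (fun j => lmul c (p j)) k.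
Proof. by case: k => [|k]; rewrite /lin_mul ?lmul_laddr !(lmulCA c) ?lmulr0. Qed.

Lemma eq_lin_mul a b p q : p =1 q -> lin_mul a b p =1 lin_mul a b q.
Proof. by move=> pq [|k]; rewrite /lin_mul !pq. Qed.

Definition posq_div (k l : posq) : posq :=
  exist (fun q : rat => (0 < q)%R) (val k / val l) (divr_gt0 (valP k) (valP l)).

(* [b] is forced by [w 0 = b * w 1]; for [k > 0] the term [w k] dominates
   [b * w k.+1] because [slope w 1] is the least slope. *)
Lemma lin_mul_min_slope w m : strictly_concave w m.+1 ->
  exists2 b, b != None /\ gval b = slope w 1 &
    forall k, w k = lin_mul (lone G) b (fun j => w j.+1) k.
Proof.
move=> concave_w; have [nz z _] := concave_w.
case e0: (w 0%N) (nz 0%N isT) => [[v0 L0]|] // _.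
case e1: (w 1%N) (nz 1%N isT) => [[v1 L1]|] // _.
exists (Some (v0 - v1, posq_div L0 L1)); first by rewrite /slope e0 e1.
case=> [|k].
  rewrite lin_mul0 e1 e0 /= subrK; congr (Some (_, _)); apply: val_inj.
  by rewrite /= divfK // gt_eqF //; apply: (valP L1).
rewrite lin_mulS lmul1r; case: (leqP k.+2 m.+1) => [k2m|/z ->]; last by [].
apply/esym/ladd_idPr; first exact/nz/ltnW.
rewrite gval_lmul ?nz // -ltrBrD.
have -> : v0 - v1 = slope w 1 by rewrite /slope e0 e1.
by apply: (slope_lt concave_w (x := 1%N) (y := k.+2)); rewrite ?inE.
Qed.

Lemma strictly_concave_factor w m : strictly_concave w m ->
  exists c ls, [/\ nonzero_factors ls,
    map root_of ls = [seq slope w k | k <- iota 1 m] &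
    forall k, w k = coef (pmul le [:: c] (prod_lin le ls)) k].
Proof.
elim: m w => [|m IHm] w concave_w.
  exists (w 0%N), [::]; split=> // -[|k]; rewrite coef_pmulC ?lmulr1 //.
  by case: concave_w => _ z _; rewrite z // /coef /= nth_nil lmulr0.
have [b [b_nz b_slope] wE] := lin_mul_min_slope concave_w.
have [c [ls [nz roots wE']]] := IHm _ (strictly_concave_behead concave_w).
exists c, ((lone G, b) :: ls); split.
- by move=> ab; rewrite inE => /orP[/eqP-> | /nz].
- rewrite /= roots /root_of b_slope subr0; congr (_ :: _).
  rewrite [iota 2 m](iotaDl 1 1) -map_comp.
  by apply/eq_in_map => -[|k]; rewrite ?mem_iota.
- move=> k; rewrite coef_pmulC coef_pmul_lin lmul_lin_mul wE.
  by apply: eq_lin_mul => j; rewrite wE' coef_pmulC.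
Qed.

(** * Corner roots of linear factors *)

Lemma nu_equiv_gval (x y : LRG) : x != None -> y != None ->
  nu_equiv x y = (gval x == gval y).
Proof. by case: x => [[]|]; case: y => [[]|]. Qed.

Lemma ladd_cases (u v : LRG) :
  [\/ ladd le u v = u, ladd le u v = v | [/\ u != None, v != None & gval u = gval v]].
Proof.
case: u => [[x k]|]; case: v => [[y l]|];
  [rewrite /= | exact: Or31 | exact: Or32 | exact: Or31].
case: eqP => [->|_]; first exact: Or33.
by case: (le x y); [apply: Or32 | apply: Or31].
Qed.

Lemma peval_linpoly (a b x : LRG) :
  peval le (linpoly (a, b)) x = ladd le b (lmul a x).
Proof. by rewrite /peval /= laddr0 !lmulr1. Qed.

Lemma corner_root_linpoly (ab : LRG * LRG) x : ab.1 != None -> ab.2 != None ->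
  corner_root le (linpoly ab) x -> x != None /\ gval x = root_of ab.
Proof.
case: ab => a b /= a_nz b_nz corner.
have := corner 0%N isT b_nz; have := corner 1%N isT a_nz.
rewrite peval_linpoly /= !lmulr1.
case: (ladd_cases b (lmul a x)) => [-> | -> | [_ ax_nz gval_eq]]; rewrite ?eqxx //.
have x_nz : x != None by move: ax_nz; rewrite lmul_eq0 negb_or => /andP[].
by split=> //; rewrite /root_of /= gval_eq gval_lmul // [gval a + _]addrC addrK.
Qed.

(* At [x = root_of ab] the two monomials have equal G-values, so their sum
   lies on a strictly higher layer than either of them. *)
Lemma corner_root_linpoly_root (ab : LRG * LRG) : ab.1 != None -> ab.2 != None ->
  corner_root le (linpoly ab) (Some (root_of ab, posq1)).
Proof.
case: ab => [[[xa la]|] [[xb lb]|]] // _ _ [|[|i]] // _ _;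
  rewrite peval_linpoly /= /root_of /= addrC subrK eqxx;
  apply/eqP => /(congr1 (fun u : LRG => if u is Some (_, l) then val l else 0%R)) /=;
  have := valP la; have := valP lb; rewrite /= => la0 lb0; lra.
Qed.

Definition distinct_corner_roots (ls : seq (LRG * LRG)) : Prop :=
  forall i j, (i < j)%N -> (j < size ls)%N ->
    forall b b', corner_root le (linpoly (nth (lone G, lone G) ls i)) b ->
                 corner_root le (linpoly (nth (lone G, lone G) ls j)) b' ->
                 ~~ nu_equiv b b'.

Lemma distinct_corner_rootsP ls : nonzero_factors ls ->
  distinct_corner_roots ls <-> uniq (map root_of ls).
Proof.
move=> nz; set x0 := (lone G, lone G).
have nz_nth i : (i < size ls)%N -> (nth x0 ls i).1 != None /\ (nth x0 ls i).2 != None.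
  by move=> i_lt; apply/nz/mem_nth.
have root_nth i : (i < size ls)%N -> nth 0 (map root_of ls) i = root_of (nth x0 ls i).
  exact: nth_map.
split=> [distinct | uniq_roots].
  apply/(uniqPn 0) => -[i [j [ij]]]; rewrite size_map => js.
  have is_ := ltn_trans ij js; rewrite !root_nth // => roots_eq.
  have [[ai bi] [aj bj]] := (nz_nth i is_, nz_nth j js).
  have := distinct i j ij js _ _ (corner_root_linpoly_root ai bi)
                                 (corner_root_linpoly_root aj bj).
  by rewrite /= roots_eq eqxx.
move=> i j ij js b b' corner corner'; have is_ := ltn_trans ij js.
have [[ai bi] [aj bj]] := (nz_nth i is_, nz_nth j js).
have [b_nz b_root] := corner_root_linpoly ai bi corner.
have [b'_nz b'_root] := corner_root_linpoly aj bj corner'.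
by rewrite nu_equiv_gval // b_root b'_root -!root_nth // nth_uniq ?size_map // ltn_eqF.
Qed.

Lemma separable_zero (f : lpoly G) : (forall k, coef f k = None) -> separable le f.
Proof. by move=> f0; exists None, [::]; split=> // k; rewrite f0 coef_pmulC. Qed.

Lemma separable_strictly_concave (f : lpoly G) n :
  strictly_concave (coef f) n -> separable le f.
Proof.
move=> concave_f; have uniq_slopes := lt_sorted_uniq (sorted_slopes concave_f).
have [c [ls [nz roots fE]]] := strictly_concave_factor concave_f.
exists c, ls; split=> //; apply/(distinct_corner_rootsP nz).
by rewrite roots.
Qed.

Lemma separable_cases (f : lpoly G) : separable le f ->
  (forall k, coef f k = None) \/ exists n, strictly_concave (coef f) n.
Proof.
case=> c [ls [nz distinct fE]].
have uniq_roots := (distinct_corner_rootsP nz).1 distinct.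
have [concave_p _] := strictly_concave_prod_lin nz uniq_roots.
case: c fE => [[cx cl]|] fE; last by left=> k; rewrite fE coef_pmulC.
right; exists (size ls); apply: (strictly_concave_translate (x := cx)) concave_p => k.
  by rewrite fE coef_pmulC lmul_eq0.
by move=> pk_nz; rewrite fE coef_pmulC gval_lmul.
Qed.

Lemma coef_lderiv (f : lpoly G) k : coef (lderiv f) k = lscale k (coef f k.+1).
Proof.
rewrite /lderiv {1}/coef; case: (ltnP k (size f).-1) => k_lt.
  by rewrite (nth_map 0%N) ?size_iota // nth_iota.
rewrite nth_default ?size_map ?size_iota // coef_default //.
by case: (size f) k_lt => [|s] //= k_lt; apply: leq_trans k_lt _.
Qed.

Lemma strictly_concave_lderiv (f : lpoly G) n :
  strictly_concave (coef f) n.+1 -> strictly_concave (coef (lderiv f)) n.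
Proof.
move=> /strictly_concave_behead; apply: (strictly_concave_translate (x := 0)) => k;
  by rewrite coef_lderiv; case: (coef f k.+1) => [[y l]|] //= _; rewrite add0r.
Qed.

End LayeredPolynomials.

Theorem corollary9p7 (G : zmodType) (le : rel G) (f : lpoly G) :
  is_total_order_group le ->
  separable le f -> separable le (lderiv f).
Proof.
move=> HG /(separable_cases HG) [f0 | [[|n] concave_f]].
- by apply: separable_zero => k; rewrite coef_lderiv f0.
- by apply: separable_zero => k; case: concave_f => _ z _; rewrite coef_lderiv z.
- exact: separable_strictly_concave (strictly_concave_lderiv concave_f).
Qed.
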